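(* Assume $\alpha>\beta\ge1$ and let $(U,V,\Lambda)$ be the similarity profile. For all measurable $\rho,\zeta:\mathbb R\to(0,\infty)$ for which the integrals are defined, setting $\mathbf u=(\rho U,\zeta V)$, $$\mathcal I_{\Lambda,2}(\rho,\zeta)\le\theta\,\mathcal E_{\mathrm B}(\mathbf u|\mathbf U),\qquad\theta:=(\alpha-\beta)\|\Lambda/V\|_{L^\infty}.$$
   Context: Fix $d_1,d_2,k>0$, real stoichiometric coefficients $\alpha,\beta\ge1$ and $A_-,A_+>0$. The similarity profile is a triple $(U,V,\Lambda)$ with $U,V\in\mathrm C^2(\mathbb R)$ positive, bounded and bounded away from $0$, $\Lambda:\mathbb R\to\mathbb R$, satisfying $d_1U''+\tfrac y2U'+\alpha\Lambda=0$, $d_2V''+\tfrac y2V'-\beta\Lambda=0$, $U^\alpha=V^\beta$ on $\mathbb R$, and $U(\pm\infty)=A_\pm^\beta$, $V(\pm\infty)=A_\pm^\alpha$; $\mathbf U=(U,V)$. $\lambda_{\mathrm B}(z)=z\log z-z+1$; $\mathcal E_{\mathrm B}(\mathbf u|\mathbf U)=\int_{\mathbb R}\big(\lambda_{\mathrm B}(\rho)U+\lambda_{\mathrm B}(\zeta)V\big)\mathrm dy$ with $\rho=u/U$, $\zeta=v/V$. Let $\Psi(r)=\alpha(r^{1/\alpha}-1)$ for $r\ge0$. The mixed term $\mathcal I_\Lambda(\rho,\zeta)=\int_{\mathbb R}\big((\zeta-1)\beta-(\rho-1)\alpha\big)\Lambda\,\mathrm dy$ is split as $\mathcal I_\Lambda=\mathcal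 I_{\Lambda,1}+\mathcal I_{\Lambda,2}$ with $\mathcal I_{\Lambda,1}(\rho,\zeta)=\int_{\mathbb R}\big(\Psi(\zeta^\beta)-\Psi(\rho^\alpha)\big)\Lambda\,\mathrm dy$ and $\mathcal I_{\Lambda,2}(\rho,\zeta)=\int_{\mathbb R}\Big(\big(\zeta-1-\tfrac1\beta\Psi(\zeta^\beta)\big)\beta-\big(\rho-1-\tfrac1\alpha\Psi(\rho^\alpha)\big)\alpha\Big)\Lambda\,\mathrm dy$. $\|\cdot\|_{L^\infty}$ is the supremum of the absolute value. *)

From HB Require Import structures.
From mathcomp Require Import all_boot all_order all_algebra.
From mathcomp Require Import all_classical all_reals all_analysis.
Set Implicit Arguments. Unset Strict Implicit. Unset Printing Implicit Defensive.
Import Order.TTheory GRing.Theory Num.Theory.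
Import numFieldNormedType.Exports.
Local Open Scope classical_set_scope.
Local Open Scope ring_scope.

Section Defs.
Variable R : realType.

Definition C2 (f : R -> R) : Prop :=
  (forall y, derivable f y 1) /\ (forall y, derivable (derive1 f) y 1) /\
  continuous (derive1 (derive1 f)).

Definition pos_bdd_away (f : R -> R) : Prop :=
  (exists c : R, 0 < c /\ forall y, c <= f y) /\ (exists M : R, forall y, f y <= M).

Definition similarity_profile (d1 d2 alpha beta Am Ap : R) (U V Lam : R -> R) : Prop :=
  C2 U /\ C2 V /\ pos_bdd_away U /\ pos_bdd_away V /\
  (forall y, d1 * derive1 (derive1 U) y + y / 2 * derive1 U y + alpha * Lam y = 0) /\
  (forall y, d2 * derive1 (derive1 V) y + y / 2 * derive1 V y - beta * Lam y = 0) /\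
  (forall y, U y `^ alpha = V y `^ beta) /\
  U x @[x --> -oo] --> Am `^ beta /\ U x @[x --> +oo] --> Ap `^ beta /\
  V x @[x --> -oo] --> Am `^ alpha /\ V x @[x --> +oo] --> Ap `^ alpha.

Definition lambdaB (z : R) : R := z * ln z - z + 1.

Definition Psi (alpha r : R) : R := alpha * (r `^ (alpha^-1) - 1).

Definition EB (U V rho zeta : R -> R) : \bar R :=
  (\int[lebesgue_measure]_(y in [set: R])
     (lambdaB (rho y) * U y + lambdaB (zeta y) * V y)%:E)%E.

Definition I2_integrand (alpha beta : R) (Lam rho zeta : R -> R) (y : R) : R :=
  ((zeta y - 1 - beta^-1 * Psi alpha (zeta y `^ beta)) * beta
   - (rho y - 1 - alpha^-1 * Psi alpha (rho y `^ alpha)) * alpha) * Lam y.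

Definition I_Lam2 (alpha beta : R) (Lam rho zeta : R -> R) : \bar R :=
  (\int[lebesgue_measure]_(y in [set: R]) (I2_integrand alpha beta Lam rho zeta y)%:E)%E.

Definition Linf_norm (f : R -> R) : \bar R :=
  ereal_sup (range (fun y => (`|f y|)%:E)).

End Defs.

From HB Require Import structures.
From mathcomp Require Import all_boot all_order all_algebra.
From mathcomp Require Import all_classical all_reals all_analysis.
From mathcomp Require Import ring lra measurable_realfun.
Import Order.TTheory GRing.Theory Num.Theory.
Import numFieldNormedType.Exports.
Local Open Scope classical_set_scope.
Local Open Scope ring_scope.

(* The rho-part of the integrand of I_{Lambda,2} vanishes, since
   Psi(r^alpha) = alpha (r - 1).  With p = beta/alpha the zeta-part is
   alpha (p z + 1 - p - z^p): it is nonnegative by weighted AM-GM, and at most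
   (alpha - beta) lambda_B(z) because z^p >= z (1 + (p - 1) ln z) by convexity
   of exp.  So the integrand is at most (alpha - beta) |Lambda/V| lambda_B(zeta) V,
   which is dominated pointwise by theta times the density of E_B, and we
   integrate.  When ||Lambda/V|| = +oo the bound is trivial unless E_B = 0, and
   then the density vanishes a.e., forcing the integrand to be <= 0 a.e.
   Only 0 < beta < alpha, U >= 0 and V bounded away from 0 (both continuous)
   are used. *)

Section integral_domination.
Context d (T : measurableType d) (R : realType) (mu : {measure set T -> \bar R}).
Variables (f g : T -> R).
Hypotheses (intf : mu.-integrable setT (EFin \o f))
  (mg : measurable_fun setT g) (g_ge0 : forall x, 0 <= g x).

Lemma ae_integral_le_ge0 : {ae mu, forall x, f x <= g x} ->
  (\int[mu]_x (f x)%:E <= \int[mu]_x (g x)%:E)%E.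
Proof.
move=> fg; have mf := measurable_int _ intf.
apply: (@le_trans _ _ (\int[mu]_x ((EFin \o f)^\+ x))%E).
  apply: le_integral => //; first exact: integrable_funepos.
  by move=> x _; rewrite funeposE le_max lexx.
apply: ae_ge0_le_integral => //.
- exact: measurable_funepos.
- by move=> x _; rewrite lee_fin.
- exact/measurable_EFinP.
move: fg; apply: filterS => x fgx _.
by rewrite funeposE ge_max !lee_fin fgx g_ge0.
Qed.

End integral_domination.

Section integral_weighted_bound.
Context d (T : measurableType d) (R : realType) (mu : {measure set T -> \bar R}).
Variables (f phi : T -> R).
Hypotheses (intf : mu.-integrable setT (EFin \o f))
  (mphi : measurable_fun setT phi) (phi_ge0 : forall x, 0 <= phi x).

Lemma integral_le_scale (c : R) : 0 <= c -> (forall x, f x <= c * phi x) ->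
  (\int[mu]_x (f x)%:E <= c%:E * \int[mu]_x (phi x)%:E)%E.
Proof.
move=> c0 fphi; rewrite -ge0_integralZl_EFin //; last first.
- exact/measurable_EFinP.
- by move=> x _; rewrite lee_fin.
apply: (@ae_integral_le_ge0 _ _ _ _ _ (fun x => c * phi x)) => //.
- exact: measurable_funM.
- by move=> x; rewrite mulr_ge0.
- exact: aeW.
Qed.

Lemma integral_le0_of_null_weight (c : T -> R) : (forall x, f x <= c x * phi x) ->
  (\int[mu]_x (phi x)%:E = 0)%E -> (\int[mu]_x (f x)%:E <= 0)%E.
Proof.
move=> fphi phi0; rewrite -(integral0 mu setT).
apply: (@ae_integral_le_ge0 _ _ _ _ _ (fun=> 0)) => //.
have : {ae mu, forall x, (phi x)%:E = 0%E}.
  have /ae_eq_integral_abs : (\int[mu]_x `|(phi x)%:E| = 0)%E.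
    by rewrite -phi0; apply: eq_integral => x _; rewrite abse_EFin ger0_norm.
  have mEphi : measurable_fun setT (EFin \o phi) by exact/measurable_EFinP.
  by move=> /(_ measurableT mEphi); apply: filterS => x /(_ I).
apply: filterS => x /eqP; rewrite eqe => /eqP phix.
by have := fphi x; rewrite phix mulr0.
Qed.

Lemma integral_le_esup_mul (c : T -> R) (L : \bar R) : (0 <= L)%E ->
  (forall x, (c x)%:E <= L)%E -> (forall x, f x <= c x * phi x) ->
  (\int[mu]_x (f x)%:E <= L * \int[mu]_x (phi x)%:E)%E.
Proof.
case: L => [r| |] //; rewrite ?lee_fin => r0 cL fphi.
  apply: integral_le_scale => // x; apply: le_trans (fphi x) _.
  by rewrite ler_wpM2r // -lee_fin cL.
have /orP[/eqP phi0|phi_gt0] : ((0 == \int[mu]_x (phi x)%:E) ||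
    (0 < \int[mu]_x (phi x)%:E))%E.
  by rewrite -le_eqVlt integral_ge0 // => x _; rewrite lee_fin.
  by rewrite -phi0 mule0; exact: integral_le0_of_null_weight fphi (esym phi0).
by rewrite gt0_mulye ?leey.
Qed.

End integral_weighted_bound.

Section pointwise_bounds.
Variable R : realType.
Implicit Types (alpha beta p x : R).

Lemma lambdaB_ge0 x : 0 < x -> 0 <= lambdaB x.
Proof.
move=> x0; have := expR_ge1Dx (- ln x); rewrite expRN lnK ?posrE // => h.
have : x * (1 - ln x) <= x * x^-1 by rewrite ler_pM2l.
rewrite mulfV ?gt_eqF // /lambdaB; lra.
Qed.

Lemma powR_le_affine x p : 0 <= x -> 0 < p < 1 -> x `^ p <= p * x + (1 - p).
Proof.
move=> x0 /andP[p0 p1].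
have q0 : 0 < 1 - p by rewrite subr_gt0.
have := @conjugate_powR _ (x `^ p) 1 p^-1 (1 - p)^-1 (powR_ge0 _ _) ler01.
rewrite !invr_gt0 !invrK -powRrM mulfV ?gt_eqF // powRr1 // powR1 mulr1.
rewrite mul1r (mulrC x); apply => //; lra.
Qed.

Lemma powR_ge_tangent x p : 0 < x -> x * (1 + (p - 1) * ln x) <= x `^ p.
Proof.
move=> x0; rewrite -{1 3}(lnK x0) ?posrE //; set t := ln x.
have -> : expR t `^ p = expR t * expR ((p - 1) * t).
  by rewrite -expRM -expRD; congr expR; lra.
by rewrite ler_pM2l ?expR_gt0 // expR_ge1Dx.
Qed.

Definition Psi_defect alpha beta x : R :=
  (x - 1 - beta^-1 * Psi alpha (x `^ beta)) * beta.

Lemma I2_integrandE alpha beta (Lam rho zeta : R -> R) y :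
  I2_integrand alpha beta Lam rho zeta y =
  (Psi_defect alpha beta (zeta y) - Psi_defect alpha alpha (rho y)) * Lam y.
Proof. by []. Qed.

Lemma Psi_defect_diag alpha x : 0 < alpha -> 0 <= x -> Psi_defect alpha alpha x = 0.
Proof.
move=> a0 x0; rewrite /Psi_defect /Psi -powRrM mulfV ?gt_eqF // powRr1 //.
by rewrite mulKf ?gt_eqF // subrr mul0r.
Qed.

Lemma Psi_defectE alpha beta x : 0 < alpha -> 0 < beta ->
  Psi_defect alpha beta x = alpha * (beta / alpha * x + (1 - beta / alpha) - x `^ (beta / alpha)).
Proof.
move=> a0 b0; rewrite /Psi_defect /Psi -powRrM.
by field; rewrite ?gt_eqF.
Qed.

Section defect_bounds.
Variables alpha beta : R.
Hypotheses (b0 : 0 < beta) (ba : beta < alpha).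

Let a0 : 0 < alpha. Proof. exact: lt_trans ba. Qed.
Let p01 : 0 < beta / alpha < 1.
Proof. by rewrite divr_gt0 //= ltr_pdivrMr // mul1r. Qed.

Lemma Psi_defect_ge0 x : 0 <= x -> 0 <= Psi_defect alpha beta x.
Proof.
move=> x0; rewrite Psi_defectE // pmulr_rge0 // subr_ge0.
exact: powR_le_affine.
Qed.

Lemma Psi_defect_le_lambdaB x : 0 < x ->
  Psi_defect alpha beta x <= (alpha - beta) * lambdaB x.
Proof.
move=> x0; have := powR_ge_tangent x (beta / alpha) x0.
rewrite Psi_defectE // /lambdaB => tangent.
have -> : (alpha - beta) * (x * ln x - x + 1) =
    alpha * (beta / alpha * x + (1 - beta / alpha) - x * (1 + (beta / alpha - 1) * ln x)).
  by field; rewrite gt_eqF.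
by rewrite ler_pM2l // lerB.
Qed.

End defect_bounds.

Lemma I2_integrand_le alpha beta (U V Lam rho zeta : R -> R) y :
  0 < beta -> beta < alpha -> 0 < rho y -> 0 < zeta y -> 0 <= U y -> 0 < V y ->
  I2_integrand alpha beta Lam rho zeta y <=
  (alpha - beta) * `|Lam y / V y| * (lambdaB (rho y) * U y + lambdaB (zeta y) * V y).
Proof.
move=> b0 ba r0 z0 U0 V0.
have a0 : 0 < alpha by exact: lt_trans ba.
rewrite I2_integrandE Psi_defect_diag // ?(ltW r0) // subr0.
have eV : `|Lam y / V y| * V y = `|Lam y|.
  by rewrite normf_div (gtr0_norm V0) divfK ?gt_eqF.
have D0 : 0 <= Psi_defect alpha beta (zeta y) by exact: Psi_defect_ge0 (ltW z0).
apply: (le_trans (ler_wpM2l D0 (ler_norm (Lam y)))).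
apply: (@le_trans _ _ ((alpha - beta) * lambdaB (zeta y) * `|Lam y|)).
  by rewrite ler_wpM2r // Psi_defect_le_lambdaB.
rewrite -eV [leRHS]mulrDr.
have -> : (alpha - beta) * lambdaB (zeta y) * (`|Lam y / V y| * V y) =
    (alpha - beta) * `|Lam y / V y| * (lambdaB (zeta y) * V y) by ring.
have ab0 : 0 <= alpha - beta by rewrite subr_ge0 ltW.
by rewrite lerDr !mulr_ge0 // lambdaB_ge0.
Qed.

Lemma measurable_lambdaB (g : R -> R) : measurable_fun setT g ->
  measurable_fun setT (fun y => lambdaB (g y)).
Proof.
move=> mg; apply: measurableT_comp => //.
rewrite /lambdaB; apply: measurable_funD => //; apply: measurable_funB => //.
by apply: measurable_funM => //; exact: measurable_ln.
Qed.

Lemma C2_measurable (f : R -> R) : C2 f -> measurable_fun setT f.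
Proof.
move=> [df _]; apply: continuous_measurable_fun => y.
by apply/differentiable_continuous; rewrite -derivable1_diffP.
Qed.

End pointwise_bounds.

Theorem mainTheorem15 (R : realType) (d1 d2 k alpha beta Am Ap : R)
  (U V Lam : R -> R) :
  0 < d1 -> 0 < d2 -> 0 < k -> 0 < Am -> 0 < Ap ->
  1 <= beta -> beta < alpha ->
  similarity_profile d1 d2 alpha beta Am Ap U V Lam ->
  forall rho zeta : R -> R,
    measurable_fun [set: R] rho -> measurable_fun [set: R] zeta ->
    (forall y, 0 < rho y) -> (forall y, 0 < zeta y) ->
    lebesgue_measure.-integrable [set: R]
      (fun y => (I2_integrand alpha beta Lam rho zeta y)%:E) ->
    (I_Lam2 alpha beta Lam rho zeta
      <= ((alpha - beta)%:E * Linf_norm (fun y => (Lam y / V y)%R)) * EB U V rho zeta)%E.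
Proof.
move=> _ _ _ _ _ b1 ba [CU [CV [[[cU [cU0 cUle]] _] [[[cV [cV0 cVle]] _] _]]]].
move=> rho zeta mrho mzeta rho0 zeta0 intI2.
have U0 y : 0 <= U y by exact: le_trans (ltW cU0) (cUle y).
have V0 y : 0 < V y by exact: lt_le_trans cV0 (cVle y).
have ab0 : (0 <= (alpha - beta)%:E)%E by rewrite lee_fin subr_ge0 ltW.
have LamV_le y : ((`|Lam y / V y|)%:E <= Linf_norm (fun y => (Lam y / V y)%R))%E.
  by apply: ereal_sup_ubound; exists y.
apply: (@integral_le_esup_mul _ _ R lebesgue_measure _ _ intI2 _ _
  (fun y => (alpha - beta) * `|Lam y / V y|)).
- apply: measurable_funD; apply: measurable_funM;
    [exact: measurable_lambdaB mrho | exact: C2_measurable CU |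
     exact: measurable_lambdaB mzeta | exact: C2_measurable CV].
- by move=> y; rewrite addr_ge0 ?mulr_ge0 ?lambdaB_ge0 ?(ltW (V0 y)).
- by rewrite mule_ge0 //; apply: le_trans (LamV_le 0); rewrite lee_fin.
- by move=> y; rewrite EFinM lee_wpmul2l.
- move=> y; apply: I2_integrand_le => //; exact: lt_le_trans ltr01 b1.
Qed.
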